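(* Let $\mathbb{K}\in\{\mathbb{R},\mathbb{C},\mathbb{H},\mathbb{O}\}$, $k=\dim_\mathbb{R}\mathbb{K}$. For $\sigma\in\mathfrak{tf}(2,\mathbb{K})$ define $\rho_\sigma\in\mathrm{End}_\mathbb{R}(\mathfrak{h}_2(\mathbb{K}))$ by $\rho_\sigma(m)=\frac12(\sigma m+m\overline{\sigma}^t)$. Then: (i) the real vector space $\{\rho_\sigma:\sigma\in\mathfrak{tf}(2,\mathbb{K})\}$ is exactly the span of the infinitesimal boosts $B_j$ ($0\le j\le k$) and the infinitesimal rotations $A_{0j}$ ($1\le j\le k$) and $A_{1j}$ ($2\le j\le k$); (ii) the Lie subalgebra of $(\mathrm{End}_\mathbb{R}(\mathfrak{h}_2(\mathbb{K})),[\cdot,\cdot])$ generated by $\{\rho_\sigma:\sigma\in\mathfrak{tf}(2,\mathbb{K})\}$ is equal to $\mathfrak{so}(1,1+k)$, the Lie algebra of endomorphisms of $\mathfrak{h}_2(\mathbb{K})$ that are skew-adjoint for the Minkowski quadratic form $q$.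
   Context: $\mathbb{H}$ are the quaternions, $\mathbb{O}$ the octonions, with their standard conjugation $z\mapsto\overline z$ and norm $|z|$. $\mathfrak{h}_2(\mathbb{K})$ is the real vector space of Hermitian $2\times2$ matrices over $\mathbb{K}$, i.e. $h(t,x,z)=\frac12\begin{pmatrix}t+x&z\\\overline z&t-x\end{pmatrix}$ with $t,x\in\mathbb{R}$, $z\in\mathbb{K}$, equipped with the quadratic form $q(h(t,x,z))=t^2-x^2-|z|^2$ (signature $(1,1+k)$). $\mathfrak{tf}(2,\mathbb{K})$ is the space of $2\times2$ matrices $\sigma$ over $\mathbb{K}$ with $\sigma_{11}+\sigma_{22}=0$; matrix products are computed entrywise with the multiplication of $\mathbb{K}$. Let $(u_2,\dots,u_k)$ be an orthonormal basis of $\mathrm{Im}\,\mathbb{K}$ and $e_{-1}=\begin{pmatrix}1&0\\0&1\end{pmatrix}$, $e_0=\begin{pmatrix}1&0\\0&-1\end{pmatrix}$, $e_1=\begin{pmatrix}0&1\\1&0\end{pmatrix}$, $e_j=\begin{pmatrix}0&u_j\\-u_j&0\end{pmatrix}$ ($2\le j\le k$). $B_j$ is the endomorphism sending $e_{-1}\mapsto e_j$, $e_j\mapsto e_{-1}$ and all other basis vectors to $0$; for $0\le i<j\le k$, $A_{ij}$ sends $e_i\mapsto e_j$, $e_j\mapsto-e_i$ and all other basis vectors to $0$. *)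

From HB Require Import structures.
From mathcomp Require Import all_boot all_order all_algebra.
From mathcomp Require Import reals.
Set Implicit Arguments. Unset Strict Implicit. Unset Printing Implicit Defensive.
Import Order.TTheory GRing.Theory Num.Theory.
Local Open Scope ring_scope.

Section Defs.
Variable R : realType.

(* ---------- Cayley–Dickson algebras: CD 0 = R, CD 1 = C, CD 2 = H, CD 3 = O ---------- *)
Fixpoint CD (n : nat) : Type :=
  match n with 0 => (R : Type) | m.+1 => (CD m * CD m)%type end.

Fixpoint cd_zero (n : nat) : CD n :=
  match n return CD n with 0 => (0 : R) | m.+1 => (cd_zero m, cd_zero m) end.

Fixpoint cd_real (n : nat) (r : R) : CD n :=
  match n return CD n with 0 => r | m.+1 => (cd_real m r, cd_zero m) end.

Fixpoint cd_add (n : nat) : CD n -> CD n -> CD n :=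
  match n return CD n -> CD n -> CD n with
  | 0 => fun a b : R => a + b
  | m.+1 => fun x y => (cd_add x.1 y.1, cd_add x.2 y.2)
  end.

Fixpoint cd_opp (n : nat) : CD n -> CD n :=
  match n return CD n -> CD n with
  | 0 => fun a : R => - a
  | m.+1 => fun x => (cd_opp x.1, cd_opp x.2)
  end.

Fixpoint cd_scale (n : nat) (r : R) : CD n -> CD n :=
  match n return CD n -> CD n with
  | 0 => fun a : R => r * a
  | m.+1 => fun x => (cd_scale r x.1, cd_scale r x.2)
  end.

Fixpoint cd_conj (n : nat) : CD n -> CD n :=
  match n return CD n -> CD n with
  | 0 => fun a : R => a
  | m.+1 => fun x => (cd_conj x.1, cd_opp x.2)
  end.

Fixpoint cd_mul (n : nat) : CD n -> CD n -> CD n :=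
  match n return CD n -> CD n -> CD n with
  | 0 => fun a b : R => a * b
  | m.+1 => fun x y =>
      (cd_add (cd_mul x.1 y.1) (cd_opp (cd_mul (cd_conj y.2) x.2)),
       cd_add (cd_mul y.2 x.1) (cd_mul x.2 (cd_conj y.1)))
  end.

Fixpoint cd_re (n : nat) : CD n -> R :=
  match n return CD n -> R with
  | 0 => fun a : R => a
  | m.+1 => fun x => cd_re x.1
  end.

Fixpoint cd_dot (n : nat) : CD n -> CD n -> R :=
  match n return CD n -> CD n -> R with
  | 0 => fun a b : R => a * b
  | m.+1 => fun x y => cd_dot x.1 y.1 + cd_dot x.2 y.2
  end.

Definition cd_norm2 (n : nat) (z : CD n) : R := cd_dot z z.

Record mat2 (n : nat) := Mat2 { m11 : CD n; m12 : CD n; m21 : CD n; m22 : CD n }.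

Definition mat_mul (n : nat) (A B : mat2 n) : mat2 n :=
  Mat2 (cd_add (cd_mul (m11 A) (m11 B)) (cd_mul (m12 A) (m21 B)))
       (cd_add (cd_mul (m11 A) (m12 B)) (cd_mul (m12 A) (m22 B)))
       (cd_add (cd_mul (m21 A) (m11 B)) (cd_mul (m22 A) (m21 B)))
       (cd_add (cd_mul (m21 A) (m12 B)) (cd_mul (m22 A) (m22 B))).

Definition mat_add (n : nat) (A B : mat2 n) : mat2 n :=
  Mat2 (cd_add (m11 A) (m11 B)) (cd_add (m12 A) (m12 B))
       (cd_add (m21 A) (m21 B)) (cd_add (m22 A) (m22 B)).

Definition mat_scale (n : nat) (r : R) (A : mat2 n) : mat2 n :=
  Mat2 (cd_scale r (m11 A)) (cd_scale r (m12 A)) (cd_scale r (m21 A)) (cd_scale r (m22 A)).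

Definition mat_ct (n : nat) (A : mat2 n) : mat2 n :=
  Mat2 (cd_conj (m11 A)) (cd_conj (m21 A)) (cd_conj (m12 A)) (cd_conj (m22 A)).

Definition tf (n : nat) (s : mat2 n) : Prop := cd_add (m11 s) (m22 s) = @cd_zero n.

Definition h2 (n : nat) : Type := (R * R * CD n)%type.

(* h(t,x,z) = 1/2 [[t+x, z], [conj z, t-x]] *)
Definition hmat (n : nat) (p : h2 n) : mat2 n :=
  Mat2 (@cd_real n ((p.1.1 + p.1.2) / 2)) (cd_scale (1/2) p.2)
       (cd_scale (1/2) (cd_conj p.2)) (@cd_real n ((p.1.1 - p.1.2) / 2)).

(* inverse of hmat on Hermitian matrices *)
Definition hcoord (n : nat) (M : mat2 n) : h2 n :=
  (cd_re (m11 M) + cd_re (m22 M), cd_re (m11 M) - cd_re (m22 M), cd_scale 2 (m12 M)).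

Definition hadd (n : nat) (p p' : h2 n) : h2 n :=
  (p.1.1 + p'.1.1, p.1.2 + p'.1.2, cd_add p.2 p'.2).
Definition hscale (n : nat) (a : R) (p : h2 n) : h2 n :=
  (a * p.1.1, a * p.1.2, cd_scale a p.2).
Definition hopp (n : nat) (p : h2 n) : h2 n := (- p.1.1, - p.1.2, cd_opp p.2).
Definition hzero (n : nat) : h2 n := (0, 0, @cd_zero n).

Definition qform (n : nat) (p : h2 n) : R := p.1.1 ^+ 2 - p.1.2 ^+ 2 - cd_norm2 p.2.
Definition qpolar (n : nat) (p p' : h2 n) : R :=
  (qform (hadd p p') - qform p - qform p') / 2.

Definition rho (n : nat) (s : mat2 n) (p : h2 n) : h2 n :=
  hcoord (mat_scale (1/2) (mat_add (mat_mul s (hmat p)) (mat_mul (hmat p) (mat_ct s)))).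

Definition endo (n : nat) : Type := h2 n -> h2 n.

Definition rlinear (n : nat) (f : endo n) : Prop :=
  forall (a : R) (p p' : h2 n), f (hadd (hscale a p) p') = hadd (hscale a (f p)) (f p').

Definition ezero (n : nat) : endo n := fun _ => @hzero n.
Definition eadd (n : nat) (f g : endo n) : endo n := fun p => hadd (f p) (g p).
Definition escale (n : nat) (a : R) (f : endo n) : endo n := fun p => hscale a (f p).
Definition bracket (n : nat) (f g : endo n) : endo n :=
  fun p => hadd (f (g p)) (hopp (g (f p))).

Definition in_span (n : nat) (S : endo n -> Prop) (f : endo n) : Prop :=
  exists (m : nat) (c : 'I_m -> R) (g : 'I_m -> endo n),
    (forall i, S (g i)) /\
    forall p, f p = foldr (fun i acc => hadd (hscale (c i) (g i p)) acc) (@hzero n) (enum 'I_m).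

Definition lie_subalg (n : nat) (L : endo n -> Prop) : Prop :=
  (forall f, L f -> rlinear f) /\
  L (@ezero n) /\
  (forall f g, L f -> L g -> L (eadd f g)) /\
  (forall a f, L f -> L (escale a f)) /\
  (forall f g, L f -> L g -> L (bracket f g)).

Definition lie_gen (n : nat) (S : endo n -> Prop) (f : endo n) : Prop :=
  forall L, lie_subalg L -> (forall g, S g -> L g) -> L f.

Definition so_q (n : nat) (f : endo n) : Prop :=
  rlinear f /\ forall p p', qpolar (f p) p' + qpolar p (f p') = 0.

Definition rho_set (n : nat) (f : endo n) : Prop :=
  exists s : mat2 n, tf s /\ forall p, f p = rho s p.

Definition orthonormal_basis_Im (n : nat) (u : nat -> CD n) : Prop :=
  (forall j, (2 <= j <= 2 ^ n)%N -> cd_re (u j) = 0) /\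
  (forall i j, (2 <= i <= 2 ^ n)%N -> (2 <= j <= 2 ^ n)%N ->
      cd_dot (u i) (u j) = (i == j)%:R) /\
  (forall z : CD n, cd_re z = 0 -> exists c : nat -> R,
      z = foldr (fun j acc => cd_add (cd_scale (c j) (u j)) acc) (@cd_zero n)
                (iota 2 (2 ^ n).-1)).

(* index i : int, -1 <= i <= k *)
Definition ebasis (n : nat) (u : nat -> CD n) (i : int) : h2 n :=
  match i with
  | Negz _ => (2, 0, @cd_zero n)                 (* e_{-1} = [[1,0],[0,1]] *)
  | Posz 0 => (0, 2, @cd_zero n)                 (* e_0 = [[1,0],[0,-1]] *)
  | Posz 1 => (0, 0, @cd_real n 2)               (* e_1 = [[0,1],[1,0]] *)
  | Posz j => (0, 0, cd_scale 2 (u j))          (* e_j = [[0,u_j],[-u_j,0]] *)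
  end.

Definition in_range (n : nat) (i : int) : bool := (-1 <= i) && (i <= (2 ^ n)%N%:Z).

Definition isB (n : nat) (u : nat -> CD n) (j : int) (f : endo n) : Prop :=
  rlinear f /\ forall i : int, in_range n i ->
    f (ebasis u i) = if i == -1 then ebasis u j
                     else if i == j then ebasis u (-1) else @hzero n.

Definition isA (n : nat) (u : nat -> CD n) (i j : int) (f : endo n) : Prop :=
  rlinear f /\ forall l : int, in_range n l ->
    f (ebasis u l) = if l == i then ebasis u j
                     else if l == j then hopp (ebasis u i) else @hzero n.

Definition boost_rot_gens (n : nat) (u : nat -> CD n) (f : endo n) : Prop :=
  (exists j : int, 0 <= j <= (2 ^ n)%N%:Z /\ isB u j f) \/
  (exists j : int, 1 <= j <= (2 ^ n)%N%:Z /\ isA u 0 j f) \/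
  (exists j : int, 2 <= j <= (2 ^ n)%N%:Z /\ isA u 1 j f).

End Defs.

From HB Require Import structures.
From mathcomp Require Import all_boot all_order all_algebra.
From mathcomp Require Import reals.
From mathcomp Require Import ring lra.
From Stdlib Require Import FunctionalExtensionality.
Set Implicit Arguments. Unset Strict Implicit. Unset Printing Implicit Defensive.
Import Order.TTheory GRing.Theory Num.Theory.
Local Open Scope ring_scope.

(* The whole
   argument is organised around one explicit family of endomorphisms of h_2(K),
     lgen a w v y : (t, x, z) |-> (a x + <w,z>, a t - <v,z>, t w + x v + Re(z) y - <y,z>),
   with a real and w, v, y in K.
   1. Every lgen a w v y is q-skew, and lgen is linear in its parameters.
   2. A direct computation in K shows rho_sigma = lgen (Re s) ((b + conj c)/2) ((conj c - b)/2) s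
      for sigma = [[s, b], [c, -s]], and every lgen arises in this way: the set
      {rho_sigma} is exactly the set of all lgen's.
   3. Let (k_1, ..., k_k) = (1, u_2, ..., u_k).  On the basis e_{-1}, e_0, e_1, e_j one
      reads off B_0 = lgen 1 0 0 0, B_j = lgen 0 k_j 0 0, A_0j = lgen 0 0 k_j 0 and
      A_1j = lgen 0 0 0 u_j.  Since a linear map is determined by the images of the
      basis, part (i) follows from the linearity of lgen in its parameters.
   4. so(q) is a Lie subalgebra containing every lgen.  Conversely an f in so(q) differs
      from a suitable lgen by a q-skew g killing e_{-1}, e_0, e_1; such a g is a skew
      map of Im K and equals half the sum over i of the brackets [A_1i, lgen 0 0 0 g(u_i)].
      Hence so(q) lies in every Lie subalgebra containing the rho_sigma: part (ii). *)

(* Coordinates on the Cayley-Dickson algebras.  CD n is R^(2^n) and [cd_coord x i] is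
   the i-th real coordinate of x; identities in CD n are proved coordinatewise. *)
Section Coordinates.
Variable R : realType.

Fixpoint cd_coord (n : nat) : CD R n -> nat -> R :=
  match n return CD R n -> nat -> R with
  | 0 => fun x i => if i == 0%N then x else 0
  | m.+1 => fun x i => if odd i then cd_coord x.2 i./2 else cd_coord x.1 i./2
  end.

Lemma cd_ext n (x y : CD R n) : (forall i, cd_coord x i = cd_coord y i) -> x = y.
Proof.
elim: n x y => [|n IH] x y /= H; first by have := H 0%N.
case: x y H => a b [c d] /= H; congr pair; apply: IH => i.
  by have := H (i.*2); rewrite odd_double doubleK.
by have := H (i.*2.+1); rewrite /= odd_double /= uphalf_double.
Qed.

Lemma cd_coord_add n (x y : CD R n) i :
  cd_coord (cd_add x y) i = cd_coord x i + cd_coord y i.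
Proof.
elim: n x y i => [|n IH] x y i /=; first by case: ifP; rewrite ?addr0.
by case: ifP; rewrite IH.
Qed.

Lemma cd_coord_opp n (x : CD R n) i : cd_coord (cd_opp x) i = - cd_coord x i.
Proof.
elim: n x i => [|n IH] x i /=; first by case: ifP; rewrite ?oppr0.
by case: ifP; rewrite IH.
Qed.

Lemma cd_coord_scale n r (x : CD R n) i : cd_coord (cd_scale r x) i = r * cd_coord x i.
Proof.
elim: n x i => [|n IH] x i /=; first by case: ifP; rewrite ?mulr0.
by case: ifP; rewrite IH.
Qed.

Lemma cd_coord_zero n i : cd_coord (cd_zero R n) i = 0.
Proof. elim: n i => [|n IH] i /=; first by case: ifP. by case: ifP; rewrite IH. Qed.

Lemma cd_coord_real n r i : cd_coord (cd_real n r) i = (i == 0%N)%:R * r.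
Proof.
elim: n i => [|n IH] i /=; first by case: ifP; rewrite ?mul1r ?mul0r.
case: ifP => odd_i; first by rewrite cd_coord_zero; case: i odd_i => // i _; rewrite mul0r.
by rewrite IH; case: i odd_i => [|[|i]].
Qed.

Definition cd_coordE :=
  (cd_coord_add, cd_coord_opp, cd_coord_scale, cd_coord_zero, cd_coord_real).

Lemma cd_re_coord n (x : CD R n) : cd_re x = cd_coord x 0.
Proof. by elim: n x => [|n IH] x //=; rewrite IH. Qed.

Lemma cd_dotC n (x y : CD R n) : cd_dot x y = cd_dot y x.
Proof. elim: n x y => [|n IH] x y /=; [exact: mulrC | by rewrite (IH x.1) (IH x.2)]. Qed.

Lemma cd_dotDl n (x y z : CD R n) : cd_dot (cd_add x y) z = cd_dot x z + cd_dot y z.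
Proof. elim: n x y z => [|n IH] x y z /=; [exact: mulrDl | rewrite !IH; ring]. Qed.

Lemma cd_dotZl n r (x z : CD R n) : cd_dot (cd_scale r x) z = r * cd_dot x z.
Proof. elim: n x z => [|n IH] x z /=; [by rewrite mulrA | rewrite !IH; ring]. Qed.

Lemma cd_dotNl n (x z : CD R n) : cd_dot (cd_opp x) z = - cd_dot x z.
Proof. elim: n x z => [|n IH] x z /=; [exact: mulNr | rewrite !IH; ring]. Qed.

Lemma cd_dot0l n (z : CD R n) : cd_dot (cd_zero R n) z = 0.
Proof. elim: n z => [|n IH] z /=; [exact: mul0r | rewrite !IH; ring]. Qed.

Lemma cd_dot_reall n r (z : CD R n) : cd_dot (cd_real n r) z = r * cd_re z.
Proof. elim: n z => [|n IH] z //=; rewrite IH cd_dot0l; ring. Qed.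

Lemma cd_dotDr n (x y z : CD R n) : cd_dot z (cd_add x y) = cd_dot z x + cd_dot z y.
Proof. by rewrite !(cd_dotC z) cd_dotDl. Qed.

Lemma cd_dotZr n r (x z : CD R n) : cd_dot z (cd_scale r x) = r * cd_dot z x.
Proof. by rewrite !(cd_dotC z) cd_dotZl. Qed.

Lemma cd_dotNr n (x z : CD R n) : cd_dot z (cd_opp x) = - cd_dot z x.
Proof. by rewrite !(cd_dotC z) cd_dotNl. Qed.

Lemma cd_dot0r n (z : CD R n) : cd_dot z (cd_zero R n) = 0.
Proof. by rewrite cd_dotC cd_dot0l. Qed.

Lemma cd_dot_realr n r (z : CD R n) : cd_dot z (cd_real n r) = r * cd_re z.
Proof. by rewrite cd_dotC cd_dot_reall. Qed.

Definition dotE := (cd_dotDl, cd_dotZl, cd_dotNl, cd_dot0l, cd_dot_reall,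
                    cd_dotDr, cd_dotZr, cd_dotNr, cd_dot0r, cd_dot_realr).

Lemma cd_re_add n (x y : CD R n) : cd_re (cd_add x y) = cd_re x + cd_re y.
Proof. by rewrite !cd_re_coord cd_coord_add. Qed.

Lemma cd_re_opp n (x : CD R n) : cd_re (cd_opp x) = - cd_re x.
Proof. by rewrite !cd_re_coord cd_coord_opp. Qed.

Lemma cd_re_scale n r (x : CD R n) : cd_re (cd_scale r x) = r * cd_re x.
Proof. by rewrite !cd_re_coord cd_coord_scale. Qed.

Lemma cd_re_zero n : cd_re (cd_zero R n) = 0 :> R.
Proof. by rewrite cd_re_coord cd_coord_zero. Qed.

Lemma cd_re_real n (r : R) : cd_re (cd_real n r) = r.
Proof. by rewrite cd_re_coord cd_coord_real mul1r. Qed.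

Definition reE := (cd_re_add, cd_re_opp, cd_re_scale, cd_re_zero, cd_re_real).

Lemma cd_conjK n (x : CD R n) : cd_conj (cd_conj x) = x.
Proof.
elim: n x => [|n IH] // [a b] /=; rewrite IH; congr pair.
by apply: cd_ext => i; rewrite !cd_coord_opp opprK.
Qed.

End Coordinates.

Ltac cd_ring := apply: cd_ext => ?; rewrite ?cd_coordE; ring.

Section Minkowski.
Variable R : realType.
Variable n : nat.
Implicit Types (p : h2 R n) (f g : endo R n) (a : R).

Lemma h2_eq p p' : p.1.1 = p'.1.1 -> p.1.2 = p'.1.2 -> p.2 = p'.2 -> p = p'.
Proof. by case: p p' => [[? ?] ?] [[? ?] ?] /= -> -> ->. Qed.

Lemma qpolarE p p' :
  qpolar p p' = p.1.1 * p'.1.1 - p.1.2 * p'.1.2 - cd_dot p.2 p'.2.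
Proof.
by rewrite /qpolar /qform /cd_norm2 /hadd /= ?dotE (cd_dotC p'.2 p.2); field.
Qed.

Lemma qpolarZl a p p' : qpolar (hscale a p) p' = a * qpolar p p'.
Proof. rewrite !qpolarE /= ?dotE; ring. Qed.

Lemma qpolarZr a p p' : qpolar p (hscale a p') = a * qpolar p p'.
Proof. rewrite !qpolarE /= ?dotE; ring. Qed.

End Minkowski.

Ltac h2_ring :=
  apply: h2_eq => /=; rewrite ?dotE ?reE; [ring | ring | cd_ring].

Section Endomorphisms.
Variable R : realType.
Variable n : nat.
Implicit Types (p : h2 R n) (f g : endo R n) (a : R).

Section Linear.
Variable f : endo R n.
Hypothesis f_lin : rlinear f.

Lemma rlinD p p' : f (hadd p p') = hadd (f p) (f p').
Proof.
have -> : hadd p p' = hadd (hscale 1 p) p' by h2_ring.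
rewrite f_lin; h2_ring.
Qed.

Lemma rlin0 : f (hzero R n) = hzero R n.
Proof.
have -> : hzero R n = hadd (hscale (-1) (hzero R n)) (hzero R n) by h2_ring.
rewrite f_lin; h2_ring.
Qed.

Lemma rlinZ a p : f (hscale a p) = hscale a (f p).
Proof.
have -> : hscale a p = hadd (hscale a p) (hzero R n) by h2_ring.
rewrite f_lin rlin0; h2_ring.
Qed.

End Linear.

Lemma so_q_ext f g : (forall p, f p = g p) -> so_q g -> so_q f.
Proof.
move=> E [g_lin g_skew]; split; first by move=> a p p'; rewrite !E g_lin.
by move=> p p'; rewrite !E g_skew.
Qed.

Lemma so_q_lie_subalg : lie_subalg (@so_q R n).
Proof.
split; first by move=> f [].
split.
  split=> [a p p' | p p']; rewrite /ezero; first by h2_ring.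
  by rewrite !qpolarE /hzero /= ?dotE; ring.
split.
  move=> f g [f_lin f_skew] [g_lin g_skew]; split=> [a p p' | p p'].
    by rewrite /eadd f_lin g_lin; h2_ring.
  have := f_skew p p'; have := g_skew p p'.
  rewrite /eadd !qpolarE /hadd /= ?dotE; lra.
split.
  move=> a f [f_lin f_skew]; split=> [b p p' | p p'].
    by rewrite /escale f_lin; h2_ring.
  by rewrite /escale qpolarZl qpolarZr -mulrDr f_skew mulr0.
move=> f g [f_lin f_skew] [g_lin g_skew]; split=> [a p p' | p p'].
  rewrite /bracket !(f_lin, g_lin, rlinD f_lin, rlinD g_lin, rlinZ f_lin, rlinZ g_lin).
  h2_ring.
have := f_skew (g p) p'; have := g_skew p (f p'); have := g_skew (f p) p'.
have := f_skew p (g p').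
rewrite /bracket !qpolarE /hadd /hopp /= ?dotE; lra.
Qed.

Lemma lie_subalg_ext (L : endo R n -> Prop) f g :
  L f -> (forall p, f p = g p) -> L g.
Proof. by move=> Lf E; have <- : f = g by apply: functional_extensionality. Qed.

End Endomorphisms.

Section LorentzFamily.
Variable R : realType.
Variable n : nat.
Implicit Types (p : h2 R n) (f : endo R n) (a c : R) (w v y z : CD R n).

(* z |-> Re(z) y - <y, z>; for imaginary y this is the rotation A_1y on K. *)
Definition im_rot y z : CD R n :=
  cd_add (cd_scale (cd_re z) y) (cd_opp (cd_real n (cd_dot y z))).

Definition lgen a w v y : endo R n := fun p =>
  (a * p.1.2 + cd_dot w p.2, a * p.1.1 - cd_dot v p.2,
   cd_add (cd_scale p.1.1 w) (cd_add (cd_scale p.1.2 v) (im_rot y p.2))).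

Definition lgen_set f : Prop := exists a w v y, forall p, f p = lgen a w v y p.

Lemma lgen_linear a w v y : rlinear (lgen a w v y).
Proof. by move=> c p p'; rewrite /lgen /im_rot; h2_ring. Qed.

Lemma lgen_skew a w v y p p' :
  qpolar (lgen a w v y p) p' + qpolar p (lgen a w v y p') = 0.
Proof.
case: p p' => [[t x] z] [[t' x'] z'].
rewrite !qpolarE /lgen /im_rot /= ?dotE ?reE (cd_dotC z w) (cd_dotC z v) (cd_dotC z y).
ring.
Qed.

Lemma lgen_so a w v y : so_q (lgen a w v y).
Proof. by split; [exact: lgen_linear | exact: lgen_skew]. Qed.

Lemma lgen_set_so f : lgen_set f -> so_q f.
Proof. by case=> [a [w [v [y E]]]]; apply: so_q_ext E (lgen_so _ _ _ _). Qed.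

Lemma lgen_combine c a w v y a' w' v' y' p :
  hadd (hscale c (lgen a w v y p)) (lgen a' w' v' y' p) =
  lgen (c * a + a') (cd_add (cd_scale c w) w') (cd_add (cd_scale c v) v')
       (cd_add (cd_scale c y) y') p.
Proof. by rewrite /lgen /im_rot; h2_ring. Qed.

Lemma lgen_zero p : lgen 0 (cd_zero R n) (cd_zero R n) (cd_zero R n) p = hzero R n.
Proof. by rewrite /lgen /im_rot; h2_ring. Qed.

End LorentzFamily.

Section Rho.
Variable R : realType.

(* The only genuinely algebra-dependent computation: it unfolds the Cayley-Dickson
   product, for each of R, C, H and O. *)
Lemma rho_lgen n (hn : (n <= 3)%N) (s b c : CD R n) (p : h2 R n) :
  rho (Mat2 s b c (cd_opp s)) p =
  lgen (cd_re s) (cd_scale (1/2) (cd_add b (cd_conj c)))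
       (cd_scale (1/2) (cd_add (cd_conj c) (cd_opp b))) s p.
Proof.
case: n hn s b c p => [|[|[|[|n]]]] // _ s b c p;
  rewrite /rho /lgen /im_rot /hcoord /hmat /mat_scale /mat_add /mat_mul /mat_ct /=;
  repeat match goal with
    | x : (_ * _)%type |- _ => destruct x
    | x : CD _ _ |- _ => destruct x
  end;
  simpl; repeat (apply/pair_equal_spec; split); by field.
Qed.

(* Trace-free means sigma = [[s, b], [c, -s]]; conversely lgen a w v y is rho_sigma for
   s = a + Im y, b = w - v and c = conj (w + v). *)
Lemma rho_set_lgen n (hn : (n <= 3)%N) (f : endo R n) : rho_set f <-> lgen_set f.
Proof.
split.
  case=> [[s b c d] [tr_s E]].
  have d_eq : d = cd_opp s.
    apply: cd_ext => i; move: tr_s; rewrite /tf /= => /(congr1 (fun x => cd_coord x i)).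
    rewrite cd_coord_add cd_coord_zero cd_coord_opp; lra.
  subst d.
  exists (cd_re s), (cd_scale (1/2) (cd_add b (cd_conj c))),
    (cd_scale (1/2) (cd_add (cd_conj c) (cd_opp b))), s => p.
  by rewrite E rho_lgen.
case=> [a [w [v [y E]]]].
pose s := cd_add (cd_real n a) (cd_add y (cd_opp (cd_real n (cd_re y)))).
exists (Mat2 s (cd_add w (cd_opp v)) (cd_conj (cd_add w v)) (cd_opp s)); split.
  by rewrite /tf /=; cd_ring.
move=> p; rewrite E rho_lgen // cd_conjK.
have -> : cd_scale (1 / 2) (cd_add (cd_add w (cd_opp v)) (cd_add w v)) = w.
  by apply: cd_ext => i; rewrite !cd_coordE; field.
have -> : cd_scale (1 / 2) (cd_add (cd_add w v) (cd_opp (cd_add w (cd_opp v)))) = v.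
  by apply: cd_ext => i; rewrite !cd_coordE; field.
by rewrite /lgen /im_rot /s; h2_ring.
Qed.

End Rho.

Section Combinations.
Variable R : realType.
Variable n : nat.
Implicit Types (f : endo R n) (l : seq nat) (c : nat -> R) (d : nat -> CD R n).

Definition cd_comb l c d : CD R n :=
  foldr (fun j acc => cd_add (cd_scale (c j) (d j)) acc) (cd_zero R n) l.

Definition h2_comb l c (e : nat -> h2 R n) : h2 R n :=
  foldr (fun j acc => hadd (hscale (c j) (e j)) acc) (hzero R n) l.

Lemma cd_coord_comb l c d i : cd_coord (cd_comb l c d) i = \sum_(j <- l) c j * cd_coord (d j) i.
Proof.
elim: l => [|j l IH] /=; first by rewrite big_nil cd_coord_zero.
by rewrite big_cons cd_coord_add cd_coord_scale IH.
Qed.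

Lemma dot_comb l c d z : cd_dot (cd_comb l c d) z = \sum_(j <- l) c j * cd_dot (d j) z.
Proof.
elim: l => [|j l IH] /=; first by rewrite big_nil cd_dot0l.
by rewrite big_cons cd_dotDl cd_dotZl IH.
Qed.

Lemma cd_comb_eq_in l c c' d d' :
  (forall j, j \in l -> cd_scale (c j) (d j) = cd_scale (c' j) (d' j)) ->
  cd_comb l c d = cd_comb l c' d'.
Proof.
elim: l => [|j l IH] //= H; rewrite H ?mem_head // IH // => k Hk.
by apply: H; rewrite in_cons Hk orbT.
Qed.

Lemma cd_comb_zero l c : cd_comb l c (fun _ => cd_zero R n) = cd_zero R n.
Proof.
by apply: cd_ext => i; rewrite cd_coord_comb cd_coord_zero big1 // => j _; rewrite mulr0.
Qed.

Lemma h2_combE l c e : h2_comb l c e =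
  (\sum_(j <- l) c j * (e j).1.1, \sum_(j <- l) c j * (e j).1.2,
   cd_comb l c (fun j => (e j).2)).
Proof. by elim: l => [|j l IH] /=; rewrite ?big_nil // IH !big_cons. Qed.

Lemma h2_comb_eq_in l c e e' : (forall j, j \in l -> e j = e' j) ->
  h2_comb l c e = h2_comb l c e'.
Proof.
elim: l => [|j l IH] //= H; rewrite H ?mem_head // IH // => k Hk.
by apply: H; rewrite in_cons Hk orbT.
Qed.

Lemma rlin_comb f l c e : rlinear f -> f (h2_comb l c e) = h2_comb l c (fun j => f (e j)).
Proof. by move=> f_lin; elim: l => [|j l IH] /=; [exact: rlin0 | rewrite f_lin IH]. Qed.

Lemma h2_comb_lgen l c A W V Y p :
  h2_comb l c (fun j => lgen (A j) (W j) (V j) (Y j) p) =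
  lgen (\sum_(j <- l) c j * A j) (cd_comb l c W) (cd_comb l c V) (cd_comb l c Y) p.
Proof.
elim: l => [|j l IH] /=; first by rewrite big_nil lgen_zero.
by rewrite IH lgen_combine big_cons.
Qed.

Lemma lie_subalg_comb (L : endo R n -> Prop) l c (F : nat -> endo R n) :
  lie_subalg L -> (forall j, j \in l -> L (F j)) ->
  L (fun p => h2_comb l c (fun j => F j p)).
Proof.
case=> [_ [L0 [LD [LZ _]]]]; elim: l => [|j l IH] LF /=; first exact: L0.
apply: (LD (escale (c j) (F j))); first by apply/LZ/LF; rewrite mem_head.
by apply: IH => k Hk; apply: LF; rewrite in_cons Hk orbT.
Qed.

End Combinations.

Section Basis.
Variable R : realType.
Variable n : nat.
Variable u : nat -> CD R n.
Hypothesis hu : orthonormal_basis_Im u.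
Implicit Types (p : h2 R n) (f g : endo R n) (a : R) (w v y z : CD R n).

Definition kdim := (2 ^ n)%N.
Definition J := iota 2 kdim.-1.
Definition L1 := iota 1 kdim.

Definition kbasis j : CD R n := if j == 1%N then cd_real n 1 else u j.

Lemma kdim_gt0 : (0 < kdim)%N.
Proof. by rewrite /kdim expn_gt0. Qed.

Lemma memJ j : (j \in J) = (2 <= j <= kdim)%N.
Proof. by rewrite /J mem_iota; have := kdim_gt0; case: kdim. Qed.

Lemma memL1 j : (j \in L1) = (1 <= j <= kdim)%N.
Proof. by rewrite /L1 mem_iota add1n ltnS. Qed.

Lemma L1E : L1 = 1%N :: J.
Proof. by rewrite /L1 /J; have := kdim_gt0; case: kdim. Qed.

Lemma u_re j : j \in J -> cd_re (u j) = 0.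
Proof. by rewrite memJ => Hj; case: hu => H _; exact: H. Qed.

Lemma u_dot i j : i \in J -> j \in J -> cd_dot (u i) (u j) = (i == j)%:R.
Proof. by rewrite !memJ => Hi Hj; case: hu => _ [H _]; exact: H. Qed.

Lemma kbasisJ j : j \in J -> kbasis j = u j.
Proof. by rewrite memJ /kbasis; case: j => [|[|j]]. Qed.

Lemma kbasis_re j : j \in L1 -> cd_re (kbasis j) = (j == 1%N)%:R.
Proof.
rewrite L1E in_cons => /orP [/eqP -> | Hj]; first by rewrite /kbasis /= cd_re_real.
by rewrite kbasisJ // u_re //; move: Hj; rewrite memJ; case: j => [|[|j]].
Qed.

Lemma kbasis_dot i j : i \in L1 -> j \in L1 -> cd_dot (kbasis i) (kbasis j) = (i == j)%:R.
Proof.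
rewrite !L1E !in_cons => /orP [/eqP -> | Hi] /orP [/eqP -> | Hj].
- by rewrite /kbasis /= cd_dot_reall cd_re_real mulr1.
- rewrite {1}/kbasis /= cd_dot_reall mul1r kbasis_re ?L1E ?in_cons ?Hj ?orbT //.
  by rewrite eq_sym.
- by rewrite {2}/kbasis /= cd_dot_realr mul1r kbasis_re ?L1E ?in_cons ?Hi ?orbT.
- by rewrite !kbasisJ // u_dot.
Qed.

Lemma sum_delta c i : i \in J -> \sum_(j <- J) c j * cd_dot (u j) (u i) = c i.
Proof.
move=> Hi; rewrite (bigD1_seq i) ?iota_uniq //= u_dot // eqxx mulr1.
rewrite big_seq_cond big1 ?addr0 // => j /andP [Hj Hji].
by rewrite u_dot // (negPf Hji) mulr0.
Qed.

Lemma decomp_Im z : cd_re z = 0 -> z = cd_comb J (fun j => cd_dot z (u j)) u.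
Proof.
move=> Hz; case: hu => _ [_ span_u]; case: (span_u z Hz) => c Ez.
have {}Ez : z = cd_comb J c u by [].
by rewrite {1}Ez; apply: cd_comb_eq_in => j Hj; rewrite Ez dot_comb sum_delta.
Qed.

Lemma decomp z :
  z = cd_add (cd_real n (cd_re z)) (cd_comb J (fun j => cd_dot z (u j)) u).
Proof.
pose z' := cd_add z (cd_opp (cd_real n (cd_re z))).
have Hz' : cd_re z' = 0 by rewrite /z' ?reE; ring.
have -> : cd_comb J (fun j => cd_dot z (u j)) u = z'.
  rewrite (decomp_Im Hz'); apply: cd_comb_eq_in => j Hj.
  by rewrite /z' ?dotE u_re // mulr0 subr0.
by rewrite /z'; cd_ring.
Qed.

Lemma decomp_kbasis z : z = cd_comb L1 (fun j => cd_dot z (kbasis j)) kbasis.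
Proof.
rewrite L1E /=.
have -> : cd_comb J (fun j => cd_dot z (kbasis j)) kbasis =
          cd_comb J (fun j => cd_dot z (u j)) u.
  by apply: cd_comb_eq_in => j Hj; rewrite kbasisJ.
by rewrite {1}(decomp z) /kbasis /= cd_dot_realr mul1r; cd_ring.
Qed.

Lemma ebasis_pos j : (1 <= j)%N -> ebasis u (Posz j) = (0, 0, cd_scale 2 (kbasis j)).
Proof. by case: j => [|[|j]] // _; apply: h2_eq => //=; rewrite /kbasis /=; cd_ring. Qed.

Lemma decomp_ebasis p : p = hadd (hscale (p.1.1 / 2) (ebasis u (-1)))
  (hadd (hscale (p.1.2 / 2) (ebasis u 0))
        (h2_comb L1 (fun j => cd_dot p.2 (kbasis j) / 2) (fun j => ebasis u (Posz j)))).
Proof.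
rewrite (@h2_comb_eq_in _ _ _ _ _ (fun j => (0, 0, cd_scale 2 (kbasis j)))); last first.
  by move=> j; rewrite memL1 => /andP [? _]; rewrite ebasis_pos.
rewrite h2_combE; case: p => [[t x] z]; apply: h2_eq => /=.
- by rewrite big1 => [|j _]; [field | rewrite mulr0].
- by rewrite big1 => [|j _]; [field | rewrite mulr0].
rewrite {1}(decomp_kbasis z) (@cd_comb_eq_in _ _ _ _ (fun j => cd_dot z (kbasis j) / 2)
  _ (fun j => cd_scale 2 (kbasis j))); first by cd_ring.
by move=> j _; apply: cd_ext => i; rewrite !cd_coordE; field.
Qed.

Lemma in_range_cases i : in_range n i -> i = -1 \/ exists l, (l <= kdim)%N /\ i = Posz l.
Proof.
case: i => [l|l] /andP [lo hi]; first by right; exists l; split; rewrite -?lez_nat.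
by left; move: lo {hi}; rewrite NegzE lerN2 lez_nat; case: l.
Qed.

Lemma endo_determined f g : rlinear f -> rlinear g ->
  (forall i, in_range n i -> f (ebasis u i) = g (ebasis u i)) -> forall p, f p = g p.
Proof.
move=> f_lin g_lin E p.
have range_pos j : (j <= kdim)%N -> in_range n (Posz j).
  by move=> Hj; rewrite /in_range lez_nat Hj andbT.
have range_m1 : in_range n (-1) by rewrite /in_range lexx /= (@le_trans _ _ 0) ?lez_nat.
rewrite (decomp_ebasis p) !(rlinD f_lin, rlinD g_lin, rlinZ f_lin, rlinZ g_lin).
rewrite (rlin_comb _ _ _ f_lin) (rlin_comb _ _ _ g_lin) E // E ?range_pos //.
congr hadd; congr hadd.
by apply: h2_comb_eq_in => j; rewrite memL1 => /andP [_ Hj]; rewrite E ?range_pos.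
Qed.

(* lgen only depends on the imaginary part of its last parameter. *)
Lemma lgen_Im a w v y p :
  lgen a w v y p = lgen a w v (cd_comb J (fun j => cd_dot y (u j)) u) p.
Proof. by rewrite {1}(decomp y) /lgen /im_rot; h2_ring. Qed.

Lemma lgen_em1 a w v y : lgen a w v y (ebasis u (-1)) = (0, 2 * a, cd_scale 2 w).
Proof. by rewrite /lgen /im_rot; h2_ring. Qed.

Lemma lgen_e0 a w v y : lgen a w v y (ebasis u 0) = (2 * a, 0, cd_scale 2 v).
Proof. by rewrite /lgen /im_rot; h2_ring. Qed.

Lemma lgen_epos a w v y l : (1 <= l)%N -> lgen a w v y (ebasis u (Posz l)) =
  (2 * cd_dot w (kbasis l), - (2 * cd_dot v (kbasis l)),
   cd_add (cd_scale (2 * cd_re (kbasis l)) y) (cd_opp (cd_real n (2 * cd_dot y (kbasis l))))).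
Proof. by move=> Hl; rewrite ebasis_pos // /lgen /im_rot; h2_ring. Qed.

Lemma isB0_lgen : isB u 0 (lgen 1 (cd_zero R n) (cd_zero R n) (cd_zero R n)).
Proof.
split=> [|i /in_range_cases [-> | [[|l] [_ ->]]]]; first exact: lgen_linear.
- by rewrite lgen_em1; h2_ring.
- by rewrite lgen_e0; h2_ring.
- by rewrite lgen_epos //; h2_ring.
Qed.

Lemma isB_lgen j : (1 <= j <= kdim)%N ->
  isB u (Posz j) (lgen 0 (kbasis j) (cd_zero R n) (cd_zero R n)).
Proof.
move=> Hj; split=> [|i /in_range_cases [-> | [[|l] [Hl ->]]]]; first exact: lgen_linear.
- by rewrite lgen_em1 ebasis_pos; [h2_ring | case/andP: Hj].
- by rewrite lgen_e0 /=; case: j Hj => // j _; h2_ring.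
rewrite lgen_epos // kbasis_dot ?memL1 ?Hj //= eqz_nat eq_sym.
by case: eqP => [-> | _]; h2_ring.
Qed.

Lemma isA0_lgen j : (1 <= j <= kdim)%N ->
  isA u 0 (Posz j) (lgen 0 (cd_zero R n) (kbasis j) (cd_zero R n)).
Proof.
move=> Hj; split=> [|i /in_range_cases [-> | [[|l] [Hl ->]]]]; first exact: lgen_linear.
- by rewrite lgen_em1; h2_ring.
- by rewrite lgen_e0 ebasis_pos; [h2_ring | case/andP: Hj].
rewrite lgen_epos // kbasis_dot ?memL1 ?Hj //= eqz_nat eq_sym.
by case: eqP => [-> | _]; h2_ring.
Qed.

Lemma isA1_lgen j : (2 <= j <= kdim)%N ->
  isA u 1 (Posz j) (lgen 0 (cd_zero R n) (cd_zero R n) (u j)).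
Proof.
move=> Hj; have jJ : j \in J by rewrite memJ.
have jL1 : j \in L1 by rewrite L1E in_cons jJ orbT.
split=> [|i /in_range_cases [-> | [[|l] [Hl ->]]]]; first exact: lgen_linear.
- by rewrite lgen_em1; h2_ring.
- by rewrite lgen_e0 /=; case: j Hj {jJ jL1} => [|[|j]] // _; h2_ring.
have lL1 : l.+1 \in L1 by rewrite memL1.
rewrite lgen_epos // -(kbasisJ jJ) (kbasis_dot jL1 lL1) (kbasis_re lL1) /=.
case: l Hl lL1 => [|l] Hl lL1.
  by case: j Hj {jJ jL1} => [|[|j]] // _; rewrite /kbasis /=; h2_ring.
case: (eqVneq j l.+2) => [-> | ne]; first by rewrite /= eqxx; h2_ring.
have -> : (l.+2 == j :> int) = false by rewrite eqz_nat eq_sym (negPf ne).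
by h2_ring.
Qed.

Lemma lgen_set_of_values a w v y f (val : int -> h2 R n) :
  rlinear f -> (forall i, in_range n i -> f (ebasis u i) = val i) ->
  (forall i, in_range n i -> lgen a w v y (ebasis u i) = val i) -> lgen_set f.
Proof.
move=> f_lin f_val l_val; exists a, w, v, y.
by apply: endo_determined (lgen_linear _ _ _ _) _ => // i Hi; rewrite f_val ?l_val.
Qed.

Lemma gens_lgen f : boost_rot_gens u f -> lgen_set f.
Proof.
have nat_range (lo j : nat) : lo%:Z <= j%:Z <= kdim%:Z -> (lo <= j <= kdim)%N by rewrite !lez_nat.
case=> [[j [Hj [f_lin f_val]]] | [[j [Hj [f_lin f_val]]] | [j [Hj [f_lin f_val]]]]];
  case: j Hj f_val => [j|j] Hj f_val; try by case/andP: Hj.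
- case: j Hj f_val => [|j] Hj f_val.
    exact: lgen_set_of_values f_lin f_val isB0_lgen.2.
  have Hj1 : (1 <= j.+1 <= kdim)%N by move/nat_range: Hj.
  exact: lgen_set_of_values f_lin f_val (isB_lgen Hj1).2.
- exact: lgen_set_of_values f_lin f_val (isA0_lgen (nat_range 1%N j Hj)).2.
- exact: lgen_set_of_values f_lin f_val (isA1_lgen (nat_range 2%N j Hj)).2.
Qed.

End Basis.

Section Span.
Variable R : realType.
Variable n : nat.
Implicit Types (p : h2 R n) (f : endo R n).

Definition lcomb (l : seq (R * endo R n)) : endo R n := fun p =>
  foldr (fun cg acc => hadd (hscale cg.1 (cg.2 p)) acc) (hzero R n) l.

Fixpoint all_in (S : endo R n -> Prop) (l : seq (R * endo R n)) : Prop :=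
  if l is cg :: l' then S cg.2 /\ all_in S l' else True.

Lemma all_in_cat S l1 l2 : all_in S l1 -> all_in S l2 -> all_in S (l1 ++ l2).
Proof. by elim: l1 => [|x l1 IH] //= [H1 H2] H; split => //; apply: IH. Qed.

Lemma all_in_map S (c : nat -> R) (g : nat -> endo R n) (s : seq nat) :
  (forall i, i \in s -> S (g i)) -> all_in S (map (fun i => (c i, g i)) s).
Proof.
elim: s => [|i s IH] //= H; split; first by apply: H; rewrite mem_head.
by apply: IH => j Hj; apply: H; rewrite in_cons Hj orbT.
Qed.

Lemma all_in_nth S l i : all_in S l -> (i < size l)%N -> S (nth (0, @ezero R n) l i).2.
Proof. by elim: l i => [|x l IH] [|i] //= [Sx Sl] lt_il; [exact: Sx | exact: IH]. Qed.

Lemma lcomb_cat l1 l2 p : lcomb (l1 ++ l2) p = hadd (lcomb l1 p) (lcomb l2 p).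
Proof. by elim: l1 => [|x l1 IH] /=; [h2_ring | rewrite IH; h2_ring]. Qed.

Lemma lcomb_map (T : Type) (F : T -> R * endo R n) (s : seq T) p :
  lcomb (map F s) p = foldr (fun j acc => hadd (hscale (F j).1 ((F j).2 p)) acc) (hzero R n) s.
Proof. by elim: s => //= j s ->. Qed.

Lemma in_spanP S f : in_span S f <-> exists l, all_in S l /\ forall p, f p = lcomb l p.
Proof.
split.
  case=> [m [c [g [Sg E]]]]; exists (map (fun i => (c i, g i)) (enum 'I_m)); split.
    by elim: (enum 'I_m) => //= i s IH; split.
  by move=> p; rewrite E lcomb_map.
case=> [l [Sl E]]; pose cg i := nth (0, @ezero R n) l i.
exists (size l), (fun i => (cg i).1), (fun i => (cg i).2); split.
  by move=> [i /= lt_il]; apply: all_in_nth.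
move=> p; rewrite E -[in LHS](mkseq_nth (0, @ezero R n) l) /mkseq -val_enum_ord.
by rewrite -map_comp lcomb_map.
Qed.

Lemma lcomb_lgen l : all_in (@lgen_set R n) l -> lgen_set (lcomb l).
Proof.
elim: l => [_ | [c g] l IH /= [[a [w [v [y Eg]]]] /IH [a' [w' [v' [y' E]]]]]].
  by exists 0, (cd_zero R n), (cd_zero R n), (cd_zero R n) => p; rewrite lgen_zero.
exists (c * a + a'), (cd_add (cd_scale c w) w'), (cd_add (cd_scale c v) v'),
  (cd_add (cd_scale c y) y') => p.
by rewrite /lcomb /= Eg -/(lcomb l p) E lgen_combine.
Qed.

Variable u : nat -> CD R n.
Hypothesis hu : orthonormal_basis_Im u.

(* Every lgen is an explicit combination of B_0, B_j, A_0j (1 <= j <= k) and A_1j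
   (2 <= j <= k), with coefficients a, <w, e_j>, <v, e_j> and <y, u_j>. *)
Lemma lgen_span a w v y : in_span (boost_rot_gens u) (lgen a w v y).
Proof.
pose o := cd_zero R n; apply/in_spanP.
exists ((a, lgen 1 o o o) ::
   map (fun j => (cd_dot w (kbasis u j), lgen 0 (kbasis u j) o o)) (L1 n)
   ++ map (fun j => (cd_dot v (kbasis u j), lgen 0 o (kbasis u j) o)) (L1 n)
   ++ map (fun j => (cd_dot y (u j), lgen 0 o o (u j))) (J n)); split.
  split; first by left; exists 0; split; last exact: isB0_lgen.
  apply: all_in_cat; [|apply: all_in_cat]; apply: all_in_map => j Hj.
  - left; exists (Posz j); rewrite memL1 in Hj; split; last exact: isB_lgen.
    by rewrite !lez_nat; case/andP: Hj.
  - by right; left; exists (Posz j); rewrite memL1 in Hj; split; last exact: isA0_lgen.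
  - by right; right; exists (Posz j); rewrite memJ in Hj; split; last exact: isA1_lgen.
move=> p; rewrite /lcomb /= -/(lcomb _ p) !lcomb_cat !lcomb_map -/(h2_comb _ _ _).
rewrite -!/(h2_comb _ _ _) !h2_comb_lgen !cd_comb_zero !big1 => [|j _|j _|j _];
  rewrite ?mulr0 //.
by rewrite -!(decomp_kbasis hu) /= /o (lgen_Im hu) /lgen /im_rot; h2_ring.
Qed.

Lemma rho_set_span (hn : (n <= 3)%N) f : rho_set f <-> in_span (boost_rot_gens u) f.
Proof.
rewrite rho_set_lgen //; split=> [[a [w [v [y E]]]] | /in_spanP [l [gens_l E]]].
  have [l [gens_l El]] := (in_spanP _ _).1 (lgen_span a w v y).
  by apply/in_spanP; exists l; split => // p; rewrite E El.
have : all_in (@lgen_set R n) l.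
  elim: l gens_l {E} => //= [[c g] l] IH [/(gens_lgen hu) gen_g /IH all_l].
  by split.
move/lcomb_lgen => [a [w [v [y El]]]]; exists a, w, v, y => p; by rewrite E El.
Qed.

End Span.

(* Part (ii): the rotations of Im K are brackets of the A_1j's. *)
Section Rotations.
Variable R : realType.
Variable n : nat.
Variable u : nat -> CD R n.
Hypothesis hu : orthonormal_basis_Im u.
Implicit Types (p : h2 R n) (f g : endo R n) (y z : CD R n).

(* The vectors e_{-1}/2, e_0/2, e_1/2 and h(0, 0, z). *)
Definition et : h2 R n := (1, 0, cd_zero R n).
Definition ex : h2 R n := (0, 1, cd_zero R n).
Definition e1 : h2 R n := (0, 0, cd_real n 1).
Definition ez z : h2 R n := (0, 0, z).

Definition rot y : endo R n := lgen 0 (cd_zero R n) (cd_zero R n) y.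

Lemma bracket_rot y y' p : cd_re y = 0 -> cd_re y' = 0 ->
  bracket (rot y) (rot y') p =
  ez (cd_add (cd_scale (cd_dot y p.2) y') (cd_opp (cd_scale (cd_dot y' p.2) y))).
Proof.
move=> re_y re_y'; case: p => [[t x] z].
rewrite /bracket /rot /lgen /im_rot /hadd /hopp; apply: h2_eq => /=;
  rewrite ?dotE ?reE ?re_y ?re_y'; [ring | ring | rewrite (cd_dotC y' y); cd_ring].
Qed.

Lemma decomp_et p : p = hadd (hscale p.1.1 et) (hadd (hscale p.1.2 ex)
  (hadd (hscale (cd_re p.2) e1) (h2_comb (J n) (fun i => cd_dot p.2 (u i)) (fun i => ez (u i))))).
Proof.
rewrite h2_combE /= big1 => [|i _]; last by rewrite mulr0.
case: p => [[t x] z]; apply: h2_eq => /=; [ring | ring |].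
by rewrite {1}(decomp hu z); cd_ring.
Qed.

(* A q-skew g vanishing on e_{-1}, e_0, e_1 is a skew-symmetric map of Im K, hence a
   combination of the rotations [rot u_i, rot g(u_i)]. *)
Section SkewOnImK.
Variable g : endo R n.
Hypothesis g_so : so_q g.
Hypothesis g_et : g et = hzero R n.
Hypothesis g_ex : g ex = hzero R n.
Hypothesis g_e1 : g e1 = hzero R n.

Lemma g_t p : (g p).1.1 = 0.
Proof. by have := g_so.2 p et; rewrite g_et !qpolarE /= ?dotE; lra. Qed.

Lemma g_x p : (g p).1.2 = 0.
Proof. by have := g_so.2 p ex; rewrite g_ex !qpolarE /= ?dotE; lra. Qed.

Lemma g_re p : cd_re (g p).2 = 0.
Proof. by have := g_so.2 p e1; rewrite g_e1 !qpolarE /= ?dotE; lra. Qed.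

Definition gimg i : CD R n := (g (ez (u i))).2.
Definition grot z : CD R n := cd_comb (J n) (fun i => cd_dot z (u i)) gimg.

Lemma g_decomp p : g p = ez (grot p.2).
Proof.
rewrite {1}(decomp_et p) !(rlinD g_so.1, rlinZ g_so.1) g_et g_ex g_e1 rlin_comb;
  last exact: g_so.1.
rewrite h2_combE; apply: h2_eq => /=.
- by rewrite big1 => [|i _]; [ring | rewrite g_t mulr0].
- by rewrite big1 => [|i _]; [ring | rewrite g_x mulr0].
- by rewrite /grot; cd_ring.
Qed.

Lemma gimg_dot i z : cd_dot (gimg i) z = - cd_dot (u i) (grot z).
Proof.
have := g_so.2 (ez (u i)) (ez z).
by rewrite (g_decomp (ez z)) !qpolarE /= -/(gimg i) g_t g_x; lra.
Qed.

Lemma grot_re z : cd_re (grot z) = 0.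
Proof. by have := g_re (ez z); rewrite g_decomp. Qed.

Lemma grot_half z : grot z = cd_comb (J n) (fun _ => 1/2)
  (fun i => cd_add (cd_scale (cd_dot (u i) z) (gimg i))
                   (cd_opp (cd_scale (cd_dot (gimg i) z) (u i)))).
Proof.
apply: cd_ext => k; rewrite cd_coord_comb.
under eq_bigr => i _ do rewrite cd_coord_add cd_coord_opp !cd_coord_scale gimg_dot.
have E1 : cd_coord (grot z) k = \sum_(i <- J n) cd_dot (u i) z * cd_coord (gimg i) k.
  by rewrite /grot cd_coord_comb; apply: eq_bigr => i _; rewrite cd_dotC.
have E2 : cd_coord (grot z) k = \sum_(i <- J n) cd_dot (grot z) (u i) * cd_coord (u i) k.
  by rewrite {1}(decomp_Im hu (grot_re z)) cd_coord_comb.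
transitivity (1/2 * (\sum_(i <- J n) cd_dot (u i) z * cd_coord (gimg i) k) +
              1/2 * (\sum_(i <- J n) cd_dot (grot z) (u i) * cd_coord (u i) k)).
  by rewrite -E1 -E2; field.
rewrite !mulr_sumr -big_split /=; apply: eq_bigr => i _; rewrite (cd_dotC (grot z)); ring.
Qed.

Lemma skew_brackets p :
  g p = h2_comb (J n) (fun _ => 1/2) (fun i => bracket (rot (u i)) (rot (gimg i)) p).
Proof.
rewrite (@h2_comb_eq_in _ _ _ _ _ (fun i => ez (cd_add (cd_scale (cd_dot (u i) p.2) (gimg i))
    (cd_opp (cd_scale (cd_dot (gimg i) p.2) (u i)))))); last first.
  by move=> i Hi; apply: bracket_rot; [exact: (u_re hu) | exact: g_re].
by rewrite h2_combE g_decomp grot_half; apply: h2_eq => //=; rewrite big1 // => i _;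
  rewrite mulr0.
Qed.

End SkewOnImK.

(* Subtracting from f the lgen with the same values on e_{-1}, e_0, e_1. *)
Definition lgen_part f : endo R n := lgen (f et).1.2 (f et).2 (f ex).2 (f e1).2.
Definition residual f : endo R n := fun p => hadd (f p) (hopp (lgen_part f p)).

Lemma residual_so f : so_q f -> so_q (residual f).
Proof.
case: (so_q_lie_subalg R n) => [_ [_ [so_add [so_scale _]]]] f_so.
apply: (so_q_ext (g := eadd f (escale (-1) (lgen_part f)))).
  by move=> p; rewrite /residual /eadd /escale; h2_ring.
by apply: so_add => //; apply/so_scale/lgen_so.
Qed.

Lemma residual_basis f : so_q f ->
  [/\ residual f et = hzero R n, residual f ex = hzero R n & residual f e1 = hzero R n].
Proof.
move=> [_ f_skew].
have S1 := f_skew et et; have S2 := f_skew ex et; have S3 := f_skew ex ex.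
have S4 := f_skew e1 et; have S5 := f_skew e1 ex; have S6 := f_skew e1 e1.
rewrite !qpolarE /= ?dotE ?reE in S1 S2 S3 S4 S5 S6.
have re_e1 : cd_re (f e1).2 = 0 by lra.
rewrite /residual /lgen_part /lgen /im_rot.
by split; (apply: h2_eq => /=; rewrite ?dotE ?reE ?re_e1; [lra | lra | cd_ring]).
Qed.

Lemma so_q_in_lie_subalg (L : endo R n -> Prop) f :
  lie_subalg L -> (forall a w v y, L (lgen a w v y)) -> so_q f -> L f.
Proof.
move=> L_sub L_lgen f_so; have [r_et r_ex r_e1] := residual_basis f_so.
have [_ [_ [L_add [_ L_bracket]]]] := L_sub.
pose brackets p := h2_comb (J n) (fun _ => 1/2)
  (fun i => bracket (rot (u i)) (rot (gimg (residual f) i)) p).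
apply: (@lie_subalg_ext _ _ L (eadd (lgen_part f) brackets)).
  apply: L_add; first exact: L_lgen.
  apply: (@lie_subalg_comb R n L (J n) _
    (fun i => bracket (rot (u i)) (rot (gimg (residual f) i))) L_sub) => i _.
  by apply: L_bracket; apply: L_lgen.
move=> p; rewrite /eadd /brackets -(skew_brackets (residual_so f_so)) //.
by rewrite /residual; h2_ring.
Qed.

End Rotations.

Lemma lie_gen_rho_so (R : realType) (n : nat) (hn : (n <= 3)%N) (u : nat -> CD R n)
  (hu : orthonormal_basis_Im u) (f : endo R n) :
  lie_gen (@rho_set R n) f <-> so_q f.
Proof.
split=> [gen_f | f_so L L_sub rho_L].
  apply: gen_f; first exact: so_q_lie_subalg.
  by move=> g /(rho_set_lgen hn) /lgen_set_so.
apply: (so_q_in_lie_subalg hu L_sub _ f_so) => a w v y.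
by apply/rho_L/(rho_set_lgen hn); exists a, w, v, y.
Qed.

Theorem mainTheorem7 (R : realType) (n : nat) (hn : (n <= 3)%N)
  (u : nat -> CD R n) (hu : orthonormal_basis_Im u) :
  (forall f : endo R n, rho_set f <-> in_span (boost_rot_gens u) f) /\
  (forall f : endo R n, lie_gen (@rho_set R n) f <-> so_q f).
Proof. by split=> f; [exact: (rho_set_span hu hn) | exact: (lie_gen_rho_so hn hu)]. Qed.
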